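(* Let $\pi\colon E\to B$ and $\pi'\colon E'\to B'$ be Hurewicz fibrations with path-connected bases $B$ and $B'$. Let $f,g\colon E\to E'$ and $\bar f,\bar g\colon B\to B'$ be continuous maps with $\pi'\circ f=\bar f\circ\pi$ and $\pi'\circ g=\bar g\circ\pi$. Let $b_0\in B$ satisfy $\bar f(b_0)=b_0'=\bar g(b_0)$, let $F_0=\pi^{-1}(b_0)$, $F_0'=\pi'^{-1}(b_0')$, and let $f_0,g_0\colon F_0\to F_0'$ be the maps induced by $f$ and $g$. Then $$\mathrm{D}(f,g)+1\leq \big(\mathrm{D}(f_0,g_0)+1\big)\big(\mathrm{cat}(B)+1\big).$$
   Context: For continuous maps $f,g\colon X\to Y$, the homotopic distance $\mathrm{D}(f,g)$ is the least integer $n\geq 0$ such that there is an open cover $\{U_0,\dots,U_n\}$ of $X$ with $f|_{U_j}\simeq g|_{U_j}$ for all $j$ ($\infty$ if none exists). For a path-connected space $B$, $\mathrm{cat}(B)$ is the least integer $n\geq 0$ such that $B$ can be covered by $n+1$ open sets whose inclusions into $B$ are null-homotopic. *)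

From HB Require Import structures.
From mathcomp Require Import all_boot all_order all_algebra.
From mathcomp Require Import all_classical all_reals topology ereal.
From mathcomp Require Import Rstruct Rstruct_topology.
From Stdlib Require Import Rdefinitions.

Set Implicit Arguments.
Unset Strict Implicit.
Unset Printing Implicit Defensive.

Import Order.TTheory GRing.Theory Num.Theory.
Local Open Scope classical_set_scope.
Local Open Scope ring_scope.

Definition unitI : set R := `[0%R, 1%R].
Definition II := set_type unitI.

Lemma I0_mem : (0%R : R) \in unitI.
Proof. by apply/mem_set; rewrite /unitI /= in_itv /= lexx ler01. Qed.
Lemma I1_mem : (1%R : R) \in unitI.
Proof. by apply/mem_set; rewrite /unitI /= in_itv /= lexx ler01. Qed.
Definition I0 : II := exist _ 0%R I0_mem.
Definition I1 : II := exist _ 1%R I1_mem.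


Section Homotopy.

Definition homotopic {X Y : topologicalType} (f g : X -> Y) : Prop :=
  exists H : X * II -> Y,
    continuous H /\ (forall x, H (x, I0) = f x) /\ (forall x, H (x, I1) = g x).

Definition nullhomotopic {X Y : topologicalType} (h : X -> Y) : Prop :=
  exists y : Y, homotopic h (fun _ => y).

(* restriction of a map to a subset U of its domain; set_type U carries the
   subspace (initial) topology *)
Definition restr {X Y : Type} (U : set X) (f : X -> Y) : set_type U -> Y :=
  fun u => f (val u).
Arguments restr {X Y} U f u /.

Definition hdist_cover {X Y : topologicalType} (f g : X -> Y) (n : nat) : Prop :=
  exists U : nat -> set X,
    (forall j : nat, (j <= n)%nat -> open (U j)) /\
    (\bigcup_(j in [set j : nat | (j <= n)%nat]) U j = setT) /\
    (forall j : nat, (j <= n)%nat -> homotopic (restr (U j) f) (restr (U j) g)).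

Definition cat_cover (B : topologicalType) (n : nat) : Prop :=
  exists U : nat -> set B,
    (forall j : nat, (j <= n)%nat -> open (U j)) /\
    (\bigcup_(j in [set j : nat | (j <= n)%nat]) U j = setT) /\
    (forall j : nat, (j <= n)%nat -> nullhomotopic (restr (U j) id)).

Definition least_nat_ext (P : nat -> Prop) : \bar R :=
  match pselect (exists n, `[< P n >]) with
  | left h => ((ex_minn h)%:R)%:E
  | right _ => +oo%E
  end.

(* homotopic distance D(f,g) in N u {oo} (embedded in \bar R) *)
Definition hdist {X Y : topologicalType} (f g : X -> Y) : \bar R :=
  least_nat_ext (hdist_cover f g).

Definition LScat (B : topologicalType) : \bar R :=
  least_nat_ext (cat_cover B).

Definition path_connected (B : topologicalType) : Prop :=
  forall x y : B, exists p : II -> B,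
    continuous p /\ p I0 = x /\ p I1 = y.

Definition hurewicz_fibration {E B : topologicalType} (p : E -> B) : Prop :=
  continuous p /\
  forall (Z : topologicalType) (h : Z -> E) (H : Z * II -> B),
    continuous h -> continuous H -> (forall z, H (z, I0) = p (h z)) ->
    exists Ht : Z * II -> E,
      continuous Ht /\ (forall w, p (Ht w) = H w) /\
      (forall z, Ht (z, I0) = h z).

End Homotopy.

From mathcomp Require Import all_boot all_order all_algebra.
From mathcomp Require Import all_classical all_reals topology ereal.
From mathcomp Require Import Rstruct Rstruct_topology normedtype zify.

(** Cover [B] by [cat B + 1] open sets [U_j] with null-homotopic inclusions and
    the fibre [F_0] by [D(f_0, g_0) + 1] open sets [V_k] on which [f_0 ~ g_0].
    As [B] is path-connected, each inclusion [U_j -> B] is homotopic to the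
    constant map at [b_0]; lifting this homotopy through [pi] deforms
    [pi^-1(U_j)] into [F_0] by a map [r_j] homotopic to the inclusion.  On the
    open set [W_jk = r_j^-1(V_k)] we get [f ~ f_0 o r_j ~ g_0 o r_j ~ g], and
    these [(D(f_0, g_0) + 1)(cat B + 1)] sets cover [E]. *)

Set Implicit Arguments.
Unset Strict Implicit.
Unset Printing Implicit Defensive.

Import Order.TTheory GRing.Theory Num.Theory.
(* Importing [Rdefinitions] instead would make [R_scope] interpret real
   arguments with Stdlib's operations rather than MathComp's. *)
Local Notation R := Rdefinitions.R.
#[local] Arguments restr {X Y} U f u /.
Local Open Scope classical_set_scope.
Local Open Scope ring_scope.

Lemma fst_continuous (X Y : topologicalType) : continuous (@fst X Y).
Proof. by move=> p; apply: cvg_fst. Qed.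

Lemma snd_continuous (X Y : topologicalType) : continuous (@snd X Y).
Proof. by move=> p; apply: cvg_snd. Qed.

Lemma pair_continuous (X Y Z : topologicalType) (u : X -> Y) (v : X -> Z) :
  continuous u -> continuous v -> continuous (fun x => (u x, v x)).
Proof. by move=> cu cv x; apply: cvg_pair; [exact: cu | exact: cv]. Qed.

Lemma comp_continuous (X Y Z : topologicalType) (u : X -> Y) (v : Y -> Z) :
  continuous u -> continuous v -> continuous (v \o u).
Proof. by move=> cu cv x; apply: continuous_comp; [exact: cu | exact: cv]. Qed.

Lemma slice_continuous (X Y Z : topologicalType) (H : X * Y -> Z) (y : Y) :
  continuous H -> continuous (fun x => H (x, y)).
Proof.
move=> cH; apply: (comp_continuous (u := fun x => (x, y))) cH.
by apply: pair_continuous => [x|]; [exact: cvg_id | exact: cst_continuous].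
Qed.

Lemma set_val_continuous (X : topologicalType) (A : set X) :
  continuous (@set_val X A).
Proof. exact: initial_continuous. Qed.

Lemma continuous_to_subspace (X Y : topologicalType) (A : set Y) (u : X -> Y)
    (uA : forall x, u x \in A) :
  continuous u -> continuous (fun x => exist _ (u x) (uA x) : set_type A).
Proof. by move=> cu; apply: (@continuous_comp_initial _ _ _ set_val). Qed.

Lemma open_set_val_image (X : topologicalType) (A : set X) (V : set (set_type A)) :
  open A -> open V -> open (set_val @` V).
Proof.
move=> oA [O oO <-].
have -> : set_val @` (@set_val X A @^-1` O) = O `&` A.
  apply/seteqP; split=> [_ [z Oz <-]|x [Ox Ax]]; first by split=> //; exact: set_valP.
  by exists (exist _ x (mem_set Ax)).
exact: openI.
Qed.

Lemma continuous_glue (X Y : topologicalType) (s : X -> R) (c : R) (u v : X -> Y) :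
  continuous s -> continuous u -> continuous v ->
  (forall x, s x = c -> u x = v x) ->
  continuous (fun x => if s x <= c then u x else v x).
Proof.
move=> cs cu cv uv; apply/continuous_subspace_setT.
pose A := s @^-1` [set r | r <= c]; pose B := s @^-1` [set r | c <= r].
have cA : closed A by apply: preimage_closed => [x _|]; [exact: cs | exact: closed_le].
have cB : closed B by apply: preimage_closed => [x _|]; [exact: cs | exact: closed_ge].
have -> : [set: X] = A `|` B.
  by apply/seteqP; split=> // x _; case: (lerP (s x) c) => [|/ltW]; [left | right].
apply: withinU_continuous => //.
- apply: (@subspace_eq_continuous _ _ _ u); last exact: continuous_subspaceT.
  by move=> x /set_mem xA; rewrite /from_subspace xA.
- apply: (@subspace_eq_continuous _ _ _ v); last exact: continuous_subspaceT.
  move=> x /set_mem xB; rewrite /from_subspace; case: ifPn => // xA.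
  by apply/esym/uv/eqP; rewrite eq_le xA xB.
Qed.

Lemma continuousD_real (X : topologicalType) (u v : X -> R) :
  continuous u -> continuous v -> continuous (fun x => u x + v x).
Proof. by move=> cu cv x; exact: (@continuousD _ R^o X u v x (cu x) (cv x)). Qed.

Lemma continuousB_real (X : topologicalType) (u v : X -> R) :
  continuous u -> continuous v -> continuous (fun x => u x - v x).
Proof. by move=> cu cv x; exact: (@continuousB _ R^o X u v x (cu x) (cv x)). Qed.

Lemma clamp01_subproof (x : R) : Num.max 0 (Num.min x 1) \in unitI.
Proof.
apply/mem_set; rewrite /unitI /= in_itv /=.
by rewrite le_max lexx /= ge_max ler01 ge_min lexx orbT.
Qed.

Definition clamp01 (x : R) : II := exist (fun y => y \in unitI) _ (clamp01_subproof x).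

Lemma clamp01_continuous : continuous clamp01.
Proof.
apply: (@continuous_comp_initial _ _ _ set_val).
have -> : set_val \o clamp01 = cst 0 \max (id \min cst 1) by [].
move=> x; apply: continuous_max; first exact: cst_continuous.
by apply: continuous_min; [| exact: cst_continuous].
Qed.

Lemma val_I0 : set_val I0 = 0. Proof. by []. Qed.
Lemma val_I1 : set_val I1 = 1. Proof. by []. Qed.

Lemma clamp01_0 : clamp01 0 = I0.
Proof. by apply: val_inj; rewrite /= (min_idPl ler01) maxxx. Qed.

Lemma clamp01_1 : clamp01 1 = I1.
Proof. by apply: val_inj; rewrite /= minxx (max_idPr ler01). Qed.

Section Homotopy.
Variables X Y Z : topologicalType.

Lemma reparam_continuous (H : X * II -> Y) (a : X * II -> R) :
  continuous H -> continuous a -> continuous (fun p => H (p.1, clamp01 (a p))).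
Proof.
move=> cH ca; apply: (comp_continuous (u := fun p => (p.1, clamp01 (a p)))) cH.
exact: pair_continuous (@fst_continuous _ _) (comp_continuous ca clamp01_continuous).
Qed.

Lemma time_continuous : continuous (fun p : X * II => set_val p.2 : R).
Proof. exact: comp_continuous (@snd_continuous _ _) (@set_val_continuous _ _). Qed.

Lemma homotopic_sym (f g : X -> Y) : homotopic f g -> homotopic g f.
Proof.
case=> H [cH [H0 H1]].
exists (fun p => H (p.1, clamp01 (1 - set_val p.2))); split; last split.
- apply: reparam_continuous => //.
  by apply: continuousB_real; [exact: cst_continuous | exact: time_continuous].
- by move=> x; rewrite /= val_I0 subr0 clamp01_1.
- by move=> x; rewrite /= val_I1 subrr clamp01_0.
Qed.

Lemma homotopic_trans (f g h : X -> Y) :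
  homotopic f g -> homotopic g h -> homotopic f h.
Proof.
case=> H1 [cH1 [H10 H11]] [H2 [cH2 [H20 H21]]].
pose s (p : X * II) := set_val p.2 + set_val p.2.
have cs : continuous s by apply: continuousD_real; exact: time_continuous.
exists (fun p => if s p <= 1 then H1 (p.1, clamp01 (s p))
                 else H2 (p.1, clamp01 (s p - 1))); split; last split.
- apply: continuous_glue => //; [exact: reparam_continuous | |].
    apply: reparam_continuous => //.
    by apply: continuousB_real => //; exact: cst_continuous.
  by move=> p ->; rewrite subrr clamp01_1 clamp01_0 H11 H20.
- by move=> x; rewrite /s /= val_I0 addr0 ler01 clamp01_0 H10.
- move=> x; rewrite /s /= val_I1 ifN; last by rewrite -ltNge ltrDl.
  by rewrite addrK clamp01_1 H21.
Qed.

Lemma homotopic_precomp (k : Z -> X) (f g : X -> Y) :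
  continuous k -> homotopic f g -> homotopic (f \o k) (g \o k).
Proof.
move=> ck [H [cH [H0 H1]]].
exists (fun q => H (k q.1, q.2)); split=> //.
apply: (comp_continuous (u := fun q => (k q.1, q.2))) cH.
exact: pair_continuous (comp_continuous (@fst_continuous _ _) ck) (@snd_continuous _ _).
Qed.

Lemma homotopic_postcomp (k : Y -> Z) (f g : X -> Y) :
  continuous k -> homotopic f g -> homotopic (k \o f) (k \o g).
Proof.
move=> ck [H [cH [H0 H1]]].
exists (k \o H); split; first exact: comp_continuous.
by split=> x /=; rewrite ?H0 ?H1.
Qed.

Lemma nullhomotopic_homotopic_cst (h : X -> Y) (y0 : Y) :
  path_connected Y -> nullhomotopic h -> homotopic h (fun=> y0).
Proof.
move=> pcY [y hy]; apply: homotopic_trans hy _.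
have [p [cp [p0 p1]]] := pcY y y0.
exists (p \o snd); split; first exact: comp_continuous (@snd_continuous _ _) cp.
by split=> x /=; rewrite ?p0 ?p1.
Qed.

End Homotopy.

Lemma homotopic_restr_preimage (X Y F : topologicalType) (Z : set X) (i : F -> X)
    (r : set_type Z -> F) (V : set F) (f g : X -> Y) :
  continuous f -> continuous g -> continuous r ->
  homotopic set_val (i \o r) ->
  homotopic (restr V (f \o i)) (restr V (g \o i)) ->
  homotopic (restr (set_val @` (r @^-1` V)) f) (restr (set_val @` (r @^-1` V)) g).
Proof.
move=> cf cg cr hZ hV; set W := set_val @` _.
have inZ (w : set_type W) : val w \in Z.
  by apply/mem_set; case: (set_valP w) => z _ <-; exact: set_valP.
pose phi (w : set_type W) : set_type Z := exist _ (val w) (inZ w).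
have cphi : continuous phi := continuous_to_subspace (@set_val_continuous _ _).
have inV (w : set_type W) : r (phi w) \in V.
  apply/mem_set; case: (set_valP w) => z Vz zw.
  by rewrite (_ : phi w = z) //; apply: val_inj.
pose psi (w : set_type W) : set_type V := exist _ (r (phi w)) (inV w).
have cpsi : continuous psi := continuous_to_subspace (comp_continuous cphi cr).
have hf := homotopic_postcomp cf (homotopic_precomp cphi hZ).
have hg := homotopic_postcomp cg (homotopic_precomp cphi hZ).
apply: homotopic_trans hf (homotopic_trans _ (homotopic_sym hg)).
exact: homotopic_precomp cpsi hV.
Qed.

Lemma fibration_deformation_into_fibre (E B : topologicalType) (pi : E -> B)
    (U : set B) (b0 : B) :
  hurewicz_fibration pi -> path_connected B -> nullhomotopic (restr U id) ->
  exists2 r : set_type (pi @^-1` U) -> set_type (pi @^-1` [set b0]),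
    continuous r & homotopic set_val (set_val \o r).
Proof.
move=> [cpi lift] pcB nullU.
pose iota (z : set_type (pi @^-1` U)) : set_type U :=
  exist (fun b => b \in U) (pi (val z)) (mem_set (set_valP z)).
have ciota : continuous iota.
  exact: continuous_to_subspace (comp_continuous (@set_val_continuous _ _) cpi).
have [K [cK [K0 K1]]] :=
  homotopic_precomp ciota (nullhomotopic_homotopic_cst b0 pcB nullU).
have [Ht [cHt [piHt Ht0]]] := lift _ _ _ (@set_val_continuous _ _) cK K0.
have Ht1 z : Ht (z, I1) \in pi @^-1` [set b0].
  by apply/mem_set; rewrite /preimage /= piHt K1.
exists (fun z => exist (fun e => e \in pi @^-1` [set b0]) _ (Ht1 z)).
  exact: continuous_to_subspace (slice_continuous (y := I1) cHt).
by exists Ht.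
Qed.

Definition homotopy_cover (X Y : topologicalType) (f g : X -> Y) (n : nat)
    (A : set X) (W : nat -> set X) : Prop :=
  (forall k, (k <= n)%N -> open (W k) /\ homotopic (restr (W k) f) (restr (W k) g)) /\
  A `<=` \bigcup_(k in [set k | (k <= n)%N]) W k.

Lemma fibration_preimage_homotopy_cover (E B E' : topologicalType) (pi : E -> B)
    (b0 : B) (F' : set E') (f g : E -> E')
    (f0 g0 : set_type (pi @^-1` [set b0]) -> set_type F') (n : nat) (U : set B) :
  hurewicz_fibration pi -> path_connected B -> continuous f -> continuous g ->
  (forall x, val (f0 x) = f (val x)) -> (forall x, val (g0 x) = g (val x)) ->
  hdist_cover f0 g0 n -> open U -> nullhomotopic (restr U id) ->
  exists W, homotopy_cover f g n (pi @^-1` U) W.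
Proof.
move=> fib pcB cf cg f0E g0E [V [oV [covV hV]]] oU nullU.
have [r cr hr] := fibration_deformation_into_fibre b0 fib pcB nullU.
exists (fun k => set_val @` (r @^-1` V k)); split=> [k kn|e Ue]; first split.
- apply: open_set_val_image; first exact: (continuousP _).1 fib.1 _ oU.
  exact: (continuousP _).1 cr _ (oV k kn).
- apply: homotopic_restr_preimage cf cg cr hr _.
  have -> : restr (V k) (f \o val) = val \o restr (V k) f0.
    by apply: funext => x /=; rewrite f0E.
  have -> : restr (V k) (g \o val) = val \o restr (V k) g0.
    by apply: funext => x /=; rewrite g0E.
  exact: homotopic_postcomp (@set_val_continuous _ _) (hV k kn).
- have : [set: set_type _] (r (exist _ e (mem_set Ue))) by [].
  by rewrite -covV => -[k kn Vk]; exists k => //; exists (exist _ e (mem_set Ue)).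
Qed.

Lemma hdist_cover_of_bigcup (X Y : topologicalType) (f g : X -> Y) (n m : nat)
    (U : nat -> set X) :
  \bigcup_(j in [set j | (j <= m)%N]) U j = setT ->
  (forall j, (j <= m)%N -> exists W, homotopy_cover f g n (U j) W) ->
  hdist_cover f g (n.+1 * m.+1).-1.
Proof.
move=> covU hU.
have /choice[W hW] : forall j, exists W,
    (j <= m)%N -> homotopy_cover f g n (U j) W.
  move=> j; case: (leqP j m) => [/hU[W hW]|_]; first by exists W.
  by exists (fun=> set0).
pose W' i := W (i %/ n.+1)%N (i %% n.+1)%N.
have W'_good i : (i <= (n.+1 * m.+1).-1)%N ->
    open (W' i) /\ homotopic (restr (W' i) f) (restr (W' i) g).
  rewrite -ltnS prednK ?muln_gt0 // => lt_i.
  have jm : (i %/ n.+1 <= m)%N by rewrite -ltnS ltn_divLR // mulnC.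
  have kn : (i %% n.+1 <= n)%N by rewrite -ltnS ltn_pmod.
  exact: (hW _ jm).1 _ kn.
exists W'; split; [by move=> i /W'_good[] | split; last by move=> i /W'_good[]].
apply/seteqP; split=> // x _.
have : [set: X] x by []; rewrite -covU => -[j /= jm Ujx].
have [k /= kn Wx] := (hW j jm).2 x Ujx.
exists (j * n.+1 + k)%N; first by rewrite /=; nia.
by rewrite /W' divnMDl // modnMDl divn_small ?ltnS // addn0 modn_small ?ltnS.
Qed.

Local Open Scope ereal_scope.

Lemma least_nat_extP (P : nat -> Prop) :
  least_nat_ext P = +oo \/ exists2 n, P n & least_nat_ext P = n%:R%:E.
Proof.
rewrite /least_nat_ext; case: pselect => [h|_]; last by left.
by right; exists (ex_minn h) => //; case: ex_minnP => n /asboolP.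
Qed.

Lemma least_nat_ext_ge0 (P : nat -> Prop) : 0 <= least_nat_ext P.
Proof. by rewrite /least_nat_ext; case: pselect => // h; rewrite lee_fin. Qed.

Lemma least_nat_ext_le (P : nat -> Prop) (n : nat) :
  P n -> least_nat_ext P <= n%:R%:E.
Proof.
move=> Pn; rewrite /least_nat_ext.
case: pselect => [h|[]]; last by exists n; apply/asboolP.
by rewrite lee_fin ler_nat; case: ex_minnP => k _; apply; apply/asboolP.
Qed.

Lemma least_nat_ext_mul_le (P Q S : nat -> Prop) :
  (forall n m, P n -> Q m -> S (n.+1 * m.+1).-1) ->
  least_nat_ext S + 1 <= (least_nat_ext P + 1) * (least_nat_ext Q + 1).
Proof.
move=> PQS.
have succ_gt0 (T : nat -> Prop) : 0 < least_nat_ext T + 1.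
  exact: lt_le_trans lte01 (leeDr 1 (least_nat_ext_ge0 T)).
have [->|[n Pn PE]] := least_nat_extP P.
  by rewrite addye // gt0_mulye ?succ_gt0 ?leey.
have [->|[m Qm QE]] := least_nat_extP Q.
  by rewrite addye // gt0_muley ?succ_gt0 ?leey.
rewrite PE QE; apply: le_trans (leeD2r 1 (least_nat_ext_le (PQS _ _ Pn Qm))) _.
by rewrite -!EFinD -EFinM lee_fin !natr1 -natrM ler_nat prednK ?muln_gt0.
Qed.

Theorem theorem6p1
  (E B E' B' : topologicalType) (pi : E -> B) (pi' : E' -> B')
  (hpi : hurewicz_fibration pi) (hpi' : hurewicz_fibration pi')
  (hB : path_connected B) (hB' : path_connected B')
  (f g : E -> E') (fb gb : B -> B')
  (hf : continuous f) (hg : continuous g)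
  (hfb : continuous fb) (hgb : continuous gb)
  (hcf : forall e, pi' (f e) = fb (pi e))
  (hcg : forall e, pi' (g e) = gb (pi e))
  (b0 : B) (b0' : B') (hfb0 : fb b0 = b0') (hgb0 : gb b0 = b0')
  (f0 g0 : set_type (pi @^-1` [set b0]) -> set_type (pi' @^-1` [set b0']))
  (hf0 : forall x, val (f0 x) = f (val x))
  (hg0 : forall x, val (g0 x) = g (val x)) :
  hdist f g + 1 <= (hdist f0 g0 + 1) * (LScat B + 1).
Proof.
apply: least_nat_ext_mul_le => n m coverF [U [oU [covU nullU]]].
apply: (@hdist_cover_of_bigcup _ _ _ _ _ _ (fun j => pi @^-1` U j)).
  by rewrite -preimage_bigcup covU preimage_setT.
move=> j jm.
exact: fibration_preimage_homotopy_cover hpi hB hf hg hf0 hg0 coverF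
  (oU j jm) (nullU j jm).
Qed.
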